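(* Let $L=\mathbb Z^2$ with $B(x,y)=x\begin{pmatrix}2&1\\1&8\end{pmatrix}y^T$ (the lattice of the form $x^2+xy+4y^2$), $Q(x)=\frac12B(x,x)$, and for $\alpha,\beta\in\mathbb Q^2$ put $\theta_{\alpha,\beta}(\tau,z)=\sum_{v\in\mathbb Z^2}e(B(\beta,v))\,e(\tau Q(\alpha+v)+B(\alpha+v,z))$ on $\mathbb H\times\mathbb C^2$. Then the nine functions $\theta_{\alpha,\beta}^3$ with $\alpha\in\{(0,0),(\frac13,\frac13),(\frac23,\frac23)\}$ and $\beta\in\{(0,0),(\frac13,0),(\frac23,0)\}$ are $\mathbb C$-linearly independent.
   Context: $e(x)=\exp(2\pi ix)$, $\mathbb H$ the upper half plane; $B$ is extended bilinearly to $\mathbb C^2$. *)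

From Stdlib Require Import Reals ZArith.
From Coquelicot Require Import Coquelicot.
Open Scope R_scope.

(* e(w) = exp(2 pi i w) for complex w *)
Definition ee (w : C) : C :=
  (exp (- (2 * PI * Im w)) * cos (2 * PI * Re w),
   exp (- (2 * PI * Im w)) * sin (2 * PI * Re w)).

Definition vec := (C * C)%type.

(* B(x,y) = x [[2,1],[1,8]] y^T, extended bilinearly to C^2 *)
Definition Bf (x y : vec) : C :=
  (RtoC 2 * fst x * fst y + fst x * snd y + snd x * fst y
   + RtoC 8 * snd x * snd y)%C.

Definition Qf (x : vec) : C := (Bf x x / RtoC 2)%C.

Definition vadd (x y : vec) : vec := (fst x + fst y, snd x + snd y)%C.

Definition rvec (a b : R) : vec := (RtoC a, RtoC b).

Definition theta_term (alpha beta : vec) (tau : C) (z : vec) (m n : Z) : C :=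
  let v := rvec (IZR m) (IZR n) in
  (ee (Bf beta v) * ee (tau * Qf (vadd alpha v) + Bf (vadd alpha v) z))%C.

Definition theta_partial (alpha beta : vec) (tau : C) (z : vec) (N : nat) : C :=
  sum_n (fun i : nat =>
    sum_n (fun j : nat =>
      theta_term alpha beta tau z (Z.of_nat i - Z.of_nat N)%Z
                                  (Z.of_nat j - Z.of_nat N)%Z) (2 * N)) (2 * N).

(* theta_{alpha,beta}(tau,z): the (absolutely convergent) sum over Z^2,
   taken as the limit of the square partial sums, real and imaginary parts. *)
Definition theta (alpha beta : vec) (tau : C) (z : vec) : C :=
  (real (Lim_seq (fun N => Re (theta_partial alpha beta tau z N))),
   real (Lim_seq (fun N => Im (theta_partial alpha beta tau z N)))).

Definition alpha_ (i : nat) : vec := rvec (INR i / 3) (INR i / 3).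
Definition beta_ (j : nat) : vec := rvec (INR j / 3) 0.

Definition cube (w : C) : C := (w * w * w)%C.

From Stdlib Require Import Reals ZArith Lra Lia Psatz.
From Coquelicot Require Import Coquelicot.
Open Scope R_scope.

(* Take [tau = i t] and [z = (k/6, 0) + i t u] with [u = (1/2 - i0/3, -i0/3)].  The term
   of [theta_{a_i,b_j}] at [v] then has modulus [exp (-2 pi t (Q(a_i + v + u) - Q(u)))],
   and [Q(a_i + v + u) >= 1/4], with equality exactly when [i = i0] and [v] is [(0,0)]
   or [(-1,0)].  Multiplied by [exp (2 pi t (1/4 - Q(u)))], [theta_{a_i,b_j}] therefore
   tends, as [t -> oo], to [0] for [i <> i0] and to [e(p) (1 + w^(j+2k))] for [i = i0],
   where [w = e(1/3)].  A vanishing combination of cubes thus yields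
   [sum_j c_{i0 j} (1 + w^(j+2k))^3 = 0] for [k = 0, 1, 2]; as [(1 + w^m)^3] is [8] or
   [-1] according as [3] divides [m] or not, this system has matrix [9 I - J], which is
   invertible. *)

Definition eR (r : R) : C := (cos (2 * PI * r), sin (2 * PI * r)).

Lemma ee_RtoC (r : R) : ee (RtoC r) = eR r.
Proof. unfold ee, eR; simpl. rewrite Rmult_0_r, Ropp_0, exp_0. f_equal; ring. Qed.

Lemma ee_pair (a b : R) : ee (a, b) = (eR a * RtoC (exp (- (2 * PI * b))))%C.
Proof. apply injective_projections; simpl; ring. Qed.

Lemma eR_add (a b : R) : eR (a + b) = (eR a * eR b)%C.
Proof.
  unfold eR; rewrite Rmult_plus_distr_l.
  apply injective_projections; simpl; [rewrite cos_plus | rewrite sin_plus]; ring.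
Qed.

Lemma eR_0 : eR 0 = RtoC 1.
Proof. unfold eR. rewrite Rmult_0_r, cos_0, sin_0. reflexivity. Qed.

Lemma eR_add_INR (r : R) (n : nat) : eR (r + INR n) = eR r.
Proof.
  unfold eR. replace (2 * PI * (r + INR n)) with (2 * PI * r + 2 * INR n * PI) by ring.
  now rewrite cos_period, sin_period.
Qed.

Lemma Cmod_eR (r : R) : Cmod (eR r) = 1.
Proof.
  unfold Cmod, eR; simpl. rewrite !Rmult_1_r.
  replace (_ * _ + _ * _) with (Rsqr (sin (2 * PI * r)) + Rsqr (cos (2 * PI * r)))
    by (unfold Rsqr; ring).
  now rewrite sin2_cos2, sqrt_1.
Qed.

Lemma eR_third : eR (1 / 3) = (-1 / 2, sqrt 3 / 2).
Proof.
  unfold eR. replace (2 * PI * (1 / 3)) with (PI - PI / 3) by field.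
  rewrite Rtrigo_facts.cos_pi_minus, sin_PI_x, cos_PI3, sin_PI3. f_equal; field.
Qed.

Lemma eR_two_thirds : eR (2 / 3) = (-1 / 2, - (sqrt 3 / 2)).
Proof.
  unfold eR. replace (2 * PI * (2 / 3)) with (PI / 3 + PI) by field.
  rewrite neg_cos, neg_sin, cos_PI3, sin_PI3. f_equal; field.
Qed.

(* [1 + w] is [2] for [w = 1] and [-w^2] for a primitive cube root of unity [w]. *)
Lemma cube_one_plus_eR_third (n : nat) :
  cube (RtoC 1 + eR (INR n / 3)) = if (n mod 3 =? 0)%nat then RtoC 8 else RtoC (-1).
Proof.
  assert (Hn : INR n / 3 = INR (n mod 3) / 3 + INR (n / 3)).
  { rewrite (Nat.div_mod_eq n 3) at 1. rewrite plus_INR, mult_INR. simpl. field. }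
  assert (S3 : sqrt 3 * sqrt 3 = 3) by (apply sqrt_sqrt; lra).
  assert (S3' : sqrt 3 * sqrt 3 * sqrt 3 = 3 * sqrt 3) by (rewrite S3; ring).
  rewrite Hn, eR_add_INR.
  pose proof (Nat.mod_upper_bound n 3 ltac:(lia)).
  destruct (n mod 3) as [|[|[|r]]]; try lia; cbn -[INR];
    [ replace (INR 0 / 3) with 0 by (simpl; field); rewrite eR_0
    | replace (INR 1 / 3) with (1 / 3) by (simpl; field); rewrite eR_third
    | replace (INR 2 / 3) with (2 / 3) by (simpl; field); rewrite eR_two_thirds ];
    unfold cube; apply injective_projections; simpl; nra.
Qed.

Definition BR (x1 x2 y1 y2 : R) : R := 2 * x1 * y1 + x1 * y2 + x2 * y1 + 8 * x2 * y2.
Definition QR (x1 x2 : R) : R := BR x1 x2 x1 x2 / 2.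

Lemma Bf_rvec (a b c d : R) : Bf (rvec a b) (rvec c d) = RtoC (BR a b c d).
Proof. apply injective_projections; simpl; unfold BR; ring. Qed.

(* With [tau = i t] and [z = x + i t u], completing the square turns
   [Im (tau Q(a+v) + B(a+v, z))] into [t (Q(a+v+u) - Q(u))]. *)
Lemma theta_term_imaginary (a1 a2 b1 b2 x1 x2 u1 u2 t : R) (m n : Z) :
  theta_term (rvec a1 a2) (rvec b1 b2) (0, t) ((x1, t * u1), (x2, t * u2)) m n =
  (eR (BR b1 b2 (IZR m) (IZR n)) * eR (BR (a1 + IZR m) (a2 + IZR n) x1 x2)
   * RtoC (exp (- (2 * PI * (t * (QR (a1 + IZR m + u1) (a2 + IZR n + u2) - QR u1 u2))))))%C.
Proof.
  unfold theta_term. rewrite Bf_rvec, ee_RtoC.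
  match goal with |- (_ * ee ?w = _)%C =>
    replace w with (BR (a1 + IZR m) (a2 + IZR n) x1 x2,
                    t * (QR (a1 + IZR m + u1) (a2 + IZR n + u2) - QR u1 u2)) end.
  - rewrite ee_pair. ring.
  - apply injective_projections; simpl; unfold QR, BR; field.
Qed.

Definition dsum {G : AbelianMonoid} (M : nat) (f : nat -> nat -> G) : G :=
  sum_n (fun i => sum_n (fun j => f i j) M) M.

Lemma dsum_ext (f g : nat -> nat -> C) (M : nat) :
  (forall i j, f i j = g i j) -> dsum M f = dsum M g.
Proof. intros H. apply sum_n_ext; intro i. apply sum_n_ext; intro j. apply H. Qed.

Lemma dsum_plus (f g : nat -> nat -> C) (M : nat) :
  dsum M (fun i j => f i j + g i j)%C = (dsum M f + dsum M g)%C.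
Proof.
  unfold dsum. rewrite <- (sum_n_plus (G := C_AbelianMonoid)).
  apply sum_n_ext; intro i. now rewrite <- (sum_n_plus (G := C_AbelianMonoid)).
Qed.

Lemma dsum_mult_r (f : nat -> nat -> C) (x : C) (M : nat) :
  dsum M (fun i j => f i j * x)%C = (dsum M f * x)%C.
Proof.
  unfold dsum. rewrite <- (sum_n_mult_r (K := C_Ring)).
  apply sum_n_ext; intro i. now rewrite <- (sum_n_mult_r (K := C_Ring)).
Qed.

Lemma dsum_minus (f g : nat -> nat -> C) (M : nat) :
  dsum M (fun i j => f i j - g i j)%C = (dsum M f - dsum M g)%C.
Proof.
  rewrite (dsum_ext _ (fun i j => f i j + g i j * RtoC (-1))%C) by (intros; ring).
  rewrite dsum_plus, dsum_mult_r.
  apply injective_projections; simpl; ring.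
Qed.

Lemma dsum_mult_r_R (f : nat -> nat -> R) (x : R) (M : nat) :
  dsum (G := R_AbelianMonoid) M (fun i j => f i j * x) = dsum (G := R_AbelianMonoid) M f * x.
Proof.
  unfold dsum. rewrite <- (sum_n_mult_r (K := R_Ring)).
  apply sum_n_ext; intro i. now rewrite <- (sum_n_mult_r (K := R_Ring)).
Qed.

Lemma sum_n_le_loc (f g : nat -> R) (M : nat) :
  (forall i, (i <= M)%nat -> f i <= g i) -> sum_n f M <= sum_n g M.
Proof.
  induction M as [|M IH]; intros H.
  - rewrite !sum_O. auto.
  - rewrite !sum_Sn. apply Rplus_le_compat; auto.
Qed.

Lemma Cmod_sum_n_le (f : nat -> C) (M : nat) :
  Cmod (sum_n f M) <= sum_n (fun i => Cmod (f i)) M.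
Proof. apply (norm_sum_n_m (K := C_AbsRing) (V := C_NormedModule)). Qed.

Lemma Cmod_dsum_le (f : nat -> nat -> C) (g : nat -> nat -> R) (M : nat) :
  (forall i j, (i <= M)%nat -> (j <= M)%nat -> Cmod (f i j) <= g i j) ->
  Cmod (dsum M f) <= dsum M g.
Proof.
  intros H. eapply Rle_trans; [apply Cmod_sum_n_le|].
  apply sum_n_le_loc; intros i Hi.
  eapply Rle_trans; [apply Cmod_sum_n_le|].
  apply sum_n_le_loc; auto.
Qed.

Lemma sum_n_dirac {G : AbelianMonoid} (f : nat -> G) (p M : nat) :
  (p <= M)%nat -> (forall q, q <> p -> f q = zero) -> sum_n f M = f p.
Proof.
  intros HpM Hf. induction M as [|M IH].
  - rewrite sum_O. now replace p with 0%nat by lia.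
  - rewrite sum_Sn. destruct (Nat.eq_dec p (S M)) as [->|Hp].
    + rewrite (sum_n_ext_loc _ (fun _ => zero)) by (intros q Hq; apply Hf; lia).
      unfold sum_n. now rewrite sum_n_m_const_zero, plus_zero_l.
    + rewrite IH, (Hf (S M)), plus_zero_r; auto; lia.
Qed.

Lemma dsum_single_row (f : nat -> nat -> C) (i0 M : nat) :
  (i0 <= M)%nat -> (forall i j, i <> i0 -> f i j = RtoC 0) ->
  dsum M f = sum_n (f i0) M.
Proof.
  intros Hi0 H. unfold dsum. rewrite (sum_n_dirac _ i0); [reflexivity | exact Hi0 |].
  intros i Hi. unfold sum_n. rewrite <- (sum_n_m_const_zero 0 M).
  apply sum_n_m_ext; intro j. now apply H.
Qed.

Definition boxsum {G : AbelianMonoid} (f : Z -> Z -> G) (N : nat) : G :=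
  dsum (2 * N) (fun i j => f (Z.of_nat i - Z.of_nat N)%Z (Z.of_nat j - Z.of_nat N)%Z).

Lemma theta_partial_boxsum (alpha beta : vec) (tau : C) (z : vec) (N : nat) :
  theta_partial alpha beta tau z N = boxsum (theta_term alpha beta tau z) N.
Proof. reflexivity. Qed.

Lemma boxsum_ext (f g : Z -> Z -> C) (N : nat) :
  (forall m n, f m n = g m n) -> boxsum f N = boxsum g N.
Proof. intros H. apply dsum_ext. auto. Qed.

Lemma boxsum_plus (f g : Z -> Z -> C) (N : nat) :
  boxsum (fun m n => f m n + g m n)%C N = (boxsum f N + boxsum g N)%C.
Proof. apply dsum_plus. Qed.

Lemma boxsum_mult_r (f : Z -> Z -> C) (x : C) (N : nat) :
  boxsum (fun m n => f m n * x)%C N = (boxsum f N * x)%C.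
Proof. apply dsum_mult_r. Qed.

Lemma boxsum_minus (f g : Z -> Z -> C) (N : nat) :
  boxsum (fun m n => f m n - g m n)%C N = (boxsum f N - boxsum g N)%C.
Proof. apply dsum_minus. Qed.

Lemma Cmod_boxsum_le (f : Z -> Z -> C) (g : Z -> Z -> R) (N : nat) :
  (forall m n, Cmod (f m n) <= g m n) -> Cmod (boxsum f N) <= boxsum g N.
Proof. intros H. apply Cmod_dsum_le. auto. Qed.

Lemma half_pow_pos (n : nat) : 0 < (1 / 2) ^ n.
Proof. apply pow_lt; lra. Qed.

Lemma half_pow_le_1 (n : nat) : (1 / 2) ^ n <= 1.
Proof. induction n; simpl; lra. Qed.

(* Truncated subtraction: exactly one of [N - M] and [M - N] is nonzero. *)
Lemma sum_n_half_pow_dist_aux (N M : nat) :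
  sum_n (fun i => (1 / 2) ^ Z.abs_nat (Z.of_nat i - Z.of_nat N)) M
  <= 2 * (1 / 2) ^ (N - M) + 2 - 2 * (1 / 2) ^ (M - N).
Proof.
  induction M as [|M IH].
  - rewrite sum_O, Nat.sub_0_r, Nat.sub_0_l.
    replace (Z.abs_nat (Z.of_nat 0 - Z.of_nat N)) with N by lia.
    pose proof (half_pow_pos N). simpl. lra.
  - rewrite sum_Sn. change plus with Rplus.
    destruct (Nat.le_gt_cases (S M) N).
    + replace (N - M)%nat with (S (N - S M)) in IH by lia.
      replace (M - N)%nat with 0%nat in IH by lia.
      replace (S M - N)%nat with 0%nat by lia.
      replace (Z.abs_nat (Z.of_nat (S M) - Z.of_nat N)) with (N - S M)%nat by lia.
      simpl in *. lra.
    + replace (N - M)%nat with 0%nat in IH by lia.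
      replace (N - S M)%nat with 0%nat by lia.
      replace (S M - N)%nat with (S (M - N)) by lia.
      replace (Z.abs_nat (Z.of_nat (S M) - Z.of_nat N)) with (S (M - N)) by lia.
      pose proof (half_pow_pos (M - N)). simpl in *. lra.
Qed.

Lemma sum_n_half_pow_dist (N M : nat) :
  sum_n (fun i => (1 / 2) ^ Z.abs_nat (Z.of_nat i - Z.of_nat N)) M <= 4.
Proof.
  eapply Rle_trans; [apply sum_n_half_pow_dist_aux|].
  pose proof (half_pow_le_1 (N - M)). pose proof (half_pow_pos (M - N)). lra.
Qed.

Lemma boxsum_half_pow (N : nat) :
  boxsum (G := R_AbelianMonoid)
    (fun m n => (1 / 2) ^ Z.abs_nat m * (1 / 2) ^ Z.abs_nat n) N <= 16.
Proof.
  unfold boxsum, dsum.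
  apply Rle_trans with
    (sum_n (fun i => 4 * (1 / 2) ^ Z.abs_nat (Z.of_nat i - Z.of_nat N)) (2 * N)).
  - apply sum_n_le_loc; intros i _.
    rewrite (sum_n_mult_l (K := R_Ring)). change mult with Rmult.
    rewrite Rmult_comm. apply Rmult_le_compat_r.
    + left; apply half_pow_pos.
    + apply sum_n_half_pow_dist.
  - rewrite (sum_n_mult_l (K := R_Ring)). change mult with Rmult.
    apply Rle_trans with (4 * 4); [|lra].
    apply Rmult_le_compat_l; [lra | apply sum_n_half_pow_dist].
Qed.

Lemma boxsum_dirac (A : C) (m0 n0 : Z) (N : nat) :
  (Z.abs m0 <= Z.of_nat N)%Z -> (Z.abs n0 <= Z.of_nat N)%Z ->
  boxsum (fun m n => if ((m =? m0) && (n =? n0))%Z%bool then A else RtoC 0) N = A.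
Proof.
  intros Hm Hn. unfold boxsum, dsum.
  rewrite (sum_n_dirac _ (Z.to_nat (m0 + Z.of_nat N))); [| lia |].
  - rewrite (sum_n_dirac _ (Z.to_nat (n0 + Z.of_nat N))); [| lia |].
    + now rewrite !Z2Nat.id, !Z.add_simpl_r, !Z.eqb_refl by lia.
    + intros q Hq. rewrite Z2Nat.id, Z.add_simpl_r, Z.eqb_refl by lia.
      destruct (Z.eqb_spec (Z.of_nat q - Z.of_nat N) n0); [lia | easy].
  - intros q Hq. unfold sum_n. rewrite <- (sum_n_m_const_zero 0 (2 * N)).
    apply sum_n_m_ext; intro j.
    destruct (Z.eqb_spec (Z.of_nat q - Z.of_nat N) m0); [lia | easy].
Qed.

Definition limC (P : nat -> C) : C :=
  (real (Lim_seq (fun N => Re (P N))), real (Lim_seq (fun N => Im (P N)))).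

Lemma theta_limC (alpha beta : vec) (tau : C) (z : vec) :
  theta alpha beta tau z = limC (theta_partial alpha beta tau z).
Proof. reflexivity. Qed.

(* Infinite limits have real part [0], as does the undefined product [Rbar_mult p_infty 0]. *)
Lemma real_Rbar_mult (l : Rbar) (F : R) : real (Rbar_mult l (Finite F)) = real l * F.
Proof.
  destruct l as [r| |]; simpl; [reflexivity| |];
    unfold Rbar_mult; simpl; destruct Rle_dec; try destruct Rle_lt_or_eq_dec; simpl; ring.
Qed.

Lemma limC_mult_r (P : nat -> C) (F : R) :
  (limC P * RtoC F)%C = limC (fun N => P N * RtoC F)%C.
Proof.
  unfold limC. rewrite (Lim_seq_ext (fun N => Re (P N * RtoC F)) (fun N => Re (P N) * F))
    by (intro; apply re_scal_r).
  rewrite (Lim_seq_ext (fun N => Im (P N * RtoC F)) (fun N => Im (P N) * F))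
    by (intro; apply im_scal_r).
  rewrite !Lim_seq_scal_r, !real_Rbar_mult.
  apply injective_projections; simpl; ring.
Qed.

Lemma real_Lim_seq_bound (u : nat -> R) (L e : R) (N0 : nat) :
  (forall N, (N0 <= N)%nat -> Rabs (u N - L) <= e) -> Rabs (real (Lim_seq u) - L) <= e.
Proof.
  intros H.
  assert (Hup : Rbar_le (Lim_seq u) (Lim_seq (fun _ => L + e))).
  { apply Lim_seq_le_loc. exists N0. intros N HN.
    specialize (H N HN). apply Rabs_le_between in H. lra. }
  assert (Hlow : Rbar_le (Lim_seq (fun _ => L - e)) (Lim_seq u)).
  { apply Lim_seq_le_loc. exists N0. intros N HN.
    specialize (H N HN). apply Rabs_le_between in H. lra. }
  rewrite Lim_seq_const in Hup, Hlow.
  destruct (Lim_seq u) as [r| |]; simpl in *; try contradiction.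
  apply Rabs_le; lra.
Qed.

Lemma limC_bound (P : nat -> C) (T : C) (e : R) (N0 : nat) :
  (forall N, (N0 <= N)%nat -> Cmod (P N - T) <= e) -> Cmod (limC P - T) <= 2 * e.
Proof.
  intros H.
  assert (Hre : Rabs (real (Lim_seq (fun N => Re (P N))) - Re T) <= e).
  { apply real_Lim_seq_bound with N0. intros N HN.
    eapply Rle_trans; [|apply (H N HN)].
    eapply Rle_trans; [apply Rmax_l | apply (Rmax_Cmod (P N - T)%C)]. }
  assert (Him : Rabs (real (Lim_seq (fun N => Im (P N))) - Im T) <= e).
  { apply real_Lim_seq_bound with N0. intros N HN.
    eapply Rle_trans; [|apply (H N HN)].
    eapply Rle_trans; [apply Rmax_r | apply (Rmax_Cmod (P N - T)%C)]. }
  assert (Hsqrt2 : sqrt 2 <= 2).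
  { rewrite <- (sqrt_square 2) at 2 by lra. apply sqrt_le_1_alt. lra. }
  set (w := (limC P - T)%C).
  assert (Hmax : Rmax (Rabs (fst w)) (Rabs (snd w)) <= e) by (apply Rmax_lub; assumption).
  pose proof (Rmax_l (Rabs (fst w)) (Rabs (snd w))). pose proof (Rabs_pos (fst w)).
  pose proof (sqrt_pos 2).
  eapply Rle_trans; [apply Cmod_2Rmax|]. nra.
Qed.

(** * Concentration of box sums *)

Lemma half_pow_le_shift (a K C0 : nat) :
  (a <= K + C0)%nat -> (1 / 2) ^ K <= 2 ^ C0 * (1 / 2) ^ a.
Proof.
  intros H.
  assert (Hanti : (1 / 2) ^ (K + C0) <= (1 / 2) ^ a).
  { replace (K + C0)%nat with (a + (K + C0 - a))%nat by lia. rewrite pow_add.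
    pose proof (half_pow_pos a). pose proof (half_pow_le_1 (K + C0 - a)). nra. }
  assert (Hinv : 2 ^ C0 * (1 / 2) ^ C0 = 1).
  { rewrite <- Rpow_mult_distr. replace (2 * (1 / 2)) with 1 by field. apply pow1. }
  rewrite pow_add in Hanti. pose proof (pow_lt 2 C0 ltac:(lra)).
  replace ((1 / 2) ^ K) with (2 ^ C0 * ((1 / 2) ^ K * (1 / 2) ^ C0))
    by (transitivity ((2 ^ C0 * (1 / 2) ^ C0) * (1 / 2) ^ K); [|rewrite Hinv]; ring).
  apply Rmult_le_compat_l; lra.
Qed.

Lemma concentration_term_bound (ph : C) (s : R) (K C0 a : nat) :
  0 <= s <= 1 / 2 -> Cmod ph <= 1 -> (a <= K + C0)%nat ->
  Cmod (ph * RtoC (s ^ K) - (if (K =? 0)%nat then ph else RtoC 0))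
  <= 2 * s * 2 ^ C0 * (1 / 2) ^ a.
Proof.
  intros Hs Hph Ha. pose proof (pow_lt 2 C0 ltac:(lra)). pose proof (half_pow_pos a).
  destruct K as [|k]; simpl Nat.eqb; cbv iota.
  - replace (ph * RtoC (s ^ 0) - ph)%C with (RtoC 0) by (simpl; ring).
    rewrite Cmod_0. apply Rmult_le_pos; [|lra]. apply Rmult_le_pos; lra.
  - replace (ph * RtoC (s ^ S k) - RtoC 0)%C with (ph * RtoC (s ^ S k))%C by ring.
    rewrite Cmod_mult, Cmod_R, Rabs_pos_eq by (apply pow_le; lra).
    assert (Hk : s ^ k <= (1 / 2) ^ k) by (apply pow_incr; lra).
    pose proof (half_pow_le_shift a (S k) C0 Ha) as Hshift. simpl in *.
    pose proof (pow_le s k ltac:(lra)).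
    apply Rle_trans with (s * s ^ k).
    { rewrite <- (Rmult_1_l (s * s ^ k)) at 2. apply Rmult_le_compat_r; nra. }
    apply Rle_trans with (s * (1 / 2) ^ k); [apply Rmult_le_compat_l|]; nra.
Qed.

Lemma boxsum_concentration (ph : Z -> Z -> C) (K : Z -> Z -> nat) (s : R) (C0 N : nat) :
  0 <= s <= 1 / 2 -> (forall m n, Cmod (ph m n) <= 1) ->
  (forall m n, (Z.abs_nat m + Z.abs_nat n <= K m n + C0)%nat) ->
  Cmod (boxsum (fun m n => ph m n * RtoC (s ^ K m n))%C N
        - boxsum (fun m n => if (K m n =? 0)%nat then ph m n else RtoC 0) N)
  <= 32 * s * 2 ^ C0.
Proof.
  intros Hs Hph HK. rewrite <- boxsum_minus.
  eapply Rle_trans; [apply Cmod_boxsum_le with (g := fun m n =>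
    (1 / 2) ^ Z.abs_nat m * (1 / 2) ^ Z.abs_nat n * (2 * s * 2 ^ C0))|].
  - intros m n. rewrite <- pow_add, Rmult_comm. now apply concentration_term_bound.
  - pose proof (boxsum_half_pow N) as Hgeom. unfold boxsum in *. rewrite dsum_mult_r_R.
    pose proof (pow_lt 2 C0 ltac:(lra)).
    assert (0 <= 2 * s * 2 ^ C0) by (apply Rmult_le_pos; [|lra]; lra). nra.
Qed.

Lemma cube_lipschitz (a b : C) (e : R) :
  Cmod (a - b) <= e -> e <= 1 -> Cmod b <= 2 -> Cmod (cube b - cube a) <= 19 * e.
Proof.
  intros Hab He Hb.
  replace (cube b - cube a)%C with ((a - b) * - (a * a + a * b + b * b))%C by (unfold cube; ring).
  rewrite Cmod_mult, Cmod_opp.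
  assert (Ha : Cmod a <= 3).
  { replace a with ((a - b) + b)%C by ring. eapply Rle_trans; [apply Cmod_triangle|]. lra. }
  assert (Hsum : Cmod (a * a + a * b + b * b) <= 19).
  { eapply Rle_trans; [apply Cmod_triangle|]. rewrite Cmod_mult.
    eapply Rle_trans; [apply Rplus_le_compat_r, Cmod_triangle|]. rewrite !Cmod_mult.
    pose proof (Cmod_ge_0 a). pose proof (Cmod_ge_0 b). nra. }
  pose proof (Cmod_ge_0 (a * a + a * b + b * b)). pose proof (Cmod_ge_0 (a - b)). nra.
Qed.

Lemma dsum_cubes_perturb (c a b : nat -> nat -> C) (M : nat) (e : R) :
  dsum M (fun i j => c i j * cube (a i j))%C = RtoC 0 ->
  (forall i j, (i <= M)%nat -> (j <= M)%nat -> Cmod (a i j - b i j) <= e) ->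
  (forall i j, (i <= M)%nat -> (j <= M)%nat -> Cmod (b i j) <= 2) -> e <= 1 ->
  Cmod (dsum M (fun i j => c i j * cube (b i j))%C)
  <= dsum (G := R_AbelianMonoid) M (fun i j => Cmod (c i j)) * (19 * e).
Proof.
  intros H0 Hab Hb He.
  replace (dsum M (fun i j => c i j * cube (b i j))%C)
    with (dsum M (fun i j => c i j * cube (b i j) - c i j * cube (a i j))%C)
    by (rewrite dsum_minus, H0; apply injective_projections; simpl; ring).
  rewrite <- dsum_mult_r_R. apply Cmod_dsum_le. intros i j Hi Hj.
  replace (c i j * cube (b i j) - c i j * cube (a i j))%C
    with (c i j * (cube (b i j) - cube (a i j)))%C by ring.
  rewrite Cmod_mult. apply Rmult_le_compat_l; [apply Cmod_ge_0|].
  apply cube_lipschitz; auto.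
Qed.

Lemma eq_0_of_small_bound (x : C) (A : R) :
  (forall eta, 0 < eta -> exists s, 0 < s <= eta /\ Cmod x <= A * s) -> x = RtoC 0.
Proof.
  intros H. apply Cmod_eq_0.
  destruct (Req_dec (Cmod x) 0) as [E|E]; [exact E|exfalso].
  pose proof (Cmod_ge_0 x).
  destruct (H (Cmod x / (Rabs A + 1))) as (s & [Hs0 Hs] & Hx).
  { apply Rdiv_lt_0_compat; [lra|]. pose proof (Rabs_pos A). lra. }
  pose proof (Rabs_pos A). pose proof (Rle_abs A).
  apply Rmult_le_compat_l with (r := Rabs A + 1) in Hs; [|lra].
  replace ((Rabs A + 1) * (Cmod x / (Rabs A + 1))) with (Cmod x) in Hs by (field; lra).
  nra.
Qed.

(** * The lattice points minimizing the shifted form *)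

(* [excess (i - i0) m n = 36 Q(a_i + (m, n) + u) - 9] with [u = (1/2 - i0/3, -i0/3)]. *)
Definition excess (d m n : Z) : Z :=
  let X := (2 * d + 6 * m + 3)%Z in
  let Y := (2 * d + 6 * n)%Z in
  (X * X + X * Y + 4 * Y * Y - 9)%Z.

Lemma excess_sum_squares (d m n : Z) :
  excess d m n
  = (9 * (d + 2 * m + n + 1) * (d + 2 * m + n + 1) + 15 * (d + 3 * n) * (d + 3 * n) - 9)%Z.
Proof. unfold excess. ring. Qed.

Lemma excess_nonneg (d m n : Z) : (-2 <= d <= 2)%Z -> (0 <= excess d m n)%Z.
Proof.
  intros Hd. rewrite excess_sum_squares.
  destruct (Z.eq_dec (d + 3 * n) 0) as [E|E].
  - assert (d = 0 /\ n = 0)%Z as [-> ->] by lia.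
    destruct (Z.le_gt_cases 0 m); nia.
  - assert (1 <= (d + 3 * n) * (d + 3 * n))%Z by nia.
    pose proof (Z.square_nonneg (d + 2 * m + n + 1)). lia.
Qed.

Lemma excess_eq_0 (d m n : Z) :
  (-2 <= d <= 2)%Z -> excess d m n = 0%Z <-> (d = 0 /\ n = 0 /\ (m = 0 \/ m = -1))%Z.
Proof.
  intros Hd. split.
  - rewrite excess_sum_squares. intros E.
    destruct (Z.eq_dec (d + 3 * n) 0) as [E'|E'].
    + assert (d = 0 /\ n = 0)%Z as [-> ->] by lia.
      destruct (Z.le_gt_cases 0 m); [|destruct (Z.le_gt_cases (-1) m)]; nia.
    + assert (1 <= (d + 3 * n) * (d + 3 * n))%Z by nia.
      pose proof (Z.square_nonneg (d + 2 * m + n + 1)). lia.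
  - intros (-> & -> & [-> | ->]); reflexivity.
Qed.

Lemma excess_ge_taxicab (d m n : Z) :
  (-2 <= d <= 2)%Z -> (Z.abs m + Z.abs n <= excess d m n + 15)%Z.
Proof.
  intros Hd. pose proof (excess_nonneg d m n Hd). rewrite excess_sum_squares in *.
  assert (Habs : forall a : Z, (Z.abs a <= a * a)%Z) by (intro a; destruct (Z.abs_spec a); nia).
  pose proof (Habs (d + 2 * m + n + 1)%Z). pose proof (Habs (d + 3 * n)%Z). lia.
Qed.

(** * Degeneration of the theta functions *)

Definition z_probe (i0 k : nat) (t : R) : vec :=
  ((INR k / 6, t * (1 / 2 - INR i0 / 3)), (0, t * - (INR i0 / 3))).

Definition normalizer (i0 : nat) (t : R) : R :=
  exp (2 * PI * (t * (1 / 4 - QR (1 / 2 - INR i0 / 3) (- (INR i0 / 3))))).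

Definition decay (t : R) : R := exp (- (2 * PI * t / 36)).

Definition phase (i j k : nat) (m n : Z) : C :=
  (eR (BR (INR j / 3) 0 (IZR m) (IZR n))
   * eR (BR (INR i / 3 + IZR m) (INR i / 3 + IZR n) (INR k / 6) 0))%C.

Definition level (i0 i : nat) (m n : Z) : nat :=
  Z.to_nat (excess (Z.of_nat i - Z.of_nat i0) m n).

Definition limit_value (i0 i j k : nat) : C :=
  if (i =? i0)%nat
  then (eR (BR (INR i0 / 3) (INR i0 / 3) (INR k / 6) 0) * (RtoC 1 + eR (INR (j + 2 * k) / 3)))%C
  else RtoC 0.

Lemma index_diff_range (i0 i : nat) :
  (i0 < 3)%nat -> (i < 3)%nat -> (-2 <= Z.of_nat i - Z.of_nat i0 <= 2)%Z.
Proof. lia. Qed.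

Lemma exp_mult_INR (a : R) (n : nat) : exp (a * INR n) = exp a ^ n.
Proof.
  induction n as [|n IH]; [simpl; now rewrite Rmult_0_r, exp_0|].
  rewrite S_INR, Rmult_plus_distr_l, exp_plus, IH, Rmult_1_r. simpl. ring.
Qed.

Lemma decay_small (eta : R) : 0 < eta -> exists t, 0 < t /\ decay t <= eta.
Proof.
  intros He. exists (36 / (2 * PI * eta)). pose proof PI_RGT_0.
  split; [apply Rdiv_lt_0_compat; [lra|]; apply Rmult_lt_0_compat; lra|].
  unfold decay. replace (- (2 * PI * (36 / (2 * PI * eta)) / 36)) with (- / eta) by (field; lra).
  rewrite exp_Ropp. pose proof (exp_ineq1_le (/ eta)).
  assert (0 < / eta) by (apply Rinv_0_lt_compat; lra).
  apply Rle_trans with (/ / eta); [apply Rinv_le_contravar; lra|]. rewrite Rinv_inv. lra.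
Qed.

Lemma theta_term_normalized (i0 i j k : nat) (t : R) (m n : Z) :
  (i0 < 3)%nat -> (i < 3)%nat ->
  (theta_term (alpha_ i) (beta_ j) (0, t) (z_probe i0 k t) m n * RtoC (normalizer i0 t))%C
  = (phase i j k m n * RtoC (decay t ^ level i0 i m n))%C.
Proof.
  intros Hi0 Hi. unfold alpha_, beta_, z_probe. rewrite theta_term_imaginary.
  unfold phase. rewrite <- Cmult_assoc, <- RtoC_mult. do 2 f_equal.
  unfold normalizer, decay, level. rewrite <- exp_plus, <- exp_mult_INR. f_equal.
  rewrite (INR_IZR_INZ (Z.to_nat _)), Z2Nat.id by (apply excess_nonneg, index_diff_range; auto).
  unfold excess. rewrite minus_IZR, !plus_IZR, !mult_IZR, !plus_IZR, !mult_IZR, minus_IZR.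
  rewrite <- !INR_IZR_INZ. unfold QR, BR. field.
Qed.

Lemma level_eq_0 (i0 i : nat) (m n : Z) : (i0 < 3)%nat -> (i < 3)%nat ->
  level i0 i m n = 0%nat <-> (i = i0 /\ n = 0 /\ (m = 0 \/ m = -1))%Z.
Proof.
  intros Hi0 Hi. pose proof (index_diff_range i0 i Hi0 Hi) as Hd.
  pose proof (excess_nonneg _ m n Hd) as Hnonneg.
  unfold level. split.
  - intros E. assert (Hx : excess (Z.of_nat i - Z.of_nat i0) m n = 0%Z) by lia.
    apply (excess_eq_0 _ m n Hd) in Hx as (Hi0i & Hn & Hm). split; [lia | auto].
  - intros (-> & -> & [-> | ->]); now rewrite Z.sub_diag.
Qed.

Lemma phase_minimal_pair (i0 j k : nat) :
  (phase i0 j k 0 0 + phase i0 j k (-1) 0)%C = limit_value i0 i0 j k.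
Proof.
  unfold phase, limit_value. rewrite Nat.eqb_refl, <- !eR_add.
  set (p := BR (INR i0 / 3) (INR i0 / 3) (INR k / 6) 0).
  replace (BR (INR j / 3) 0 (IZR 0) (IZR 0)
           + BR (INR i0 / 3 + IZR 0) (INR i0 / 3 + IZR 0) (INR k / 6) 0)
    with (p + 0) by (unfold p, BR; simpl; ring).
  rewrite <- (eR_add_INR (BR (INR j / 3) 0 (IZR (-1)) (IZR 0)
    + BR (INR i0 / 3 + IZR (-1)) (INR i0 / 3 + IZR 0) (INR k / 6) 0) (j + k)).
  replace (_ + _ + INR (j + k)) with (p + INR (j + 2 * k) / 3)
    by (unfold p, BR; rewrite !plus_INR, mult_INR; simpl; field).
  rewrite !eR_add, eR_0. ring.
Qed.

Lemma boxsum_level_0 (i0 i j k N : nat) : (i0 < 3)%nat -> (i < 3)%nat -> (1 <= N)%nat ->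
  boxsum (fun m n => if (level i0 i m n =? 0)%nat then phase i j k m n else RtoC 0) N
  = limit_value i0 i j k.
Proof.
  intros Hi0 Hi HN.
  destruct (Nat.eqb_spec i i0) as [->|Hne].
  - rewrite <- phase_minimal_pair.
    rewrite (boxsum_ext _ (fun m n =>
      ((if ((m =? 0) && (n =? 0))%Z%bool then phase i0 j k 0 0 else RtoC 0)
       + (if ((m =? -1) && (n =? 0))%Z%bool then phase i0 j k (-1) 0 else RtoC 0))%C)).
    + now rewrite boxsum_plus, !boxsum_dirac by (simpl; lia).
    + intros m n. destruct (Nat.eqb_spec (level i0 i0 m n) 0) as [E|E].
      * apply level_eq_0 in E as (_ & -> & [-> | ->]); auto;
          cbn -[phase Cplus RtoC IZR]; ring.
      * destruct (Z.eqb_spec m 0), (Z.eqb_spec n 0), (Z.eqb_spec m (-1));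
          cbn -[phase Cplus RtoC IZR level];
          try (exfalso; apply E, level_eq_0; auto; lia); ring.
  - unfold limit_value. rewrite (proj2 (Nat.eqb_neq i i0) Hne).
    rewrite (boxsum_ext _ (fun _ _ => RtoC 0 * RtoC 0)%C), boxsum_mult_r; [apply Cmult_0_r|].
    intros m n. destruct (Nat.eqb_spec (level i0 i m n) 0) as [E|E]; [|ring].
    now destruct (proj1 (level_eq_0 i0 i m n Hi0 Hi) E).
Qed.

Lemma theta_normalized_approx (i0 i j k : nat) (t : R) :
  (i0 < 3)%nat -> (i < 3)%nat -> decay t <= 1 / 2 ->
  Cmod (theta (alpha_ i) (beta_ j) (0, t) (z_probe i0 k t) * RtoC (normalizer i0 t)
        - limit_value i0 i j k) <= 64 * 2 ^ 15 * decay t.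
Proof.
  intros Hi0 Hi Ht.
  rewrite theta_limC, limC_mult_r.
  replace (64 * 2 ^ 15 * decay t) with (2 * (32 * decay t * 2 ^ 15)) by ring.
  apply limC_bound with (N0 := 1%nat). intros N HN.
  rewrite theta_partial_boxsum, <- boxsum_mult_r,
    (boxsum_ext _ _ _ (fun m n => theta_term_normalized i0 i j k t m n Hi0 Hi)),
    <- (boxsum_level_0 i0 i j k N) by auto.
  apply boxsum_concentration.
  - split; [left; apply exp_pos | exact Ht].
  - intros m n. unfold phase. rewrite Cmod_mult, !Cmod_eR. lra.
  - intros m n. pose proof (index_diff_range i0 i Hi0 Hi) as Hd.
    pose proof (excess_ge_taxicab _ m n Hd). pose proof (excess_nonneg _ m n Hd).
    unfold level. lia.
Qed.

Lemma Cmod_limit_value_le (i0 i j k : nat) : Cmod (limit_value i0 i j k) <= 2.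
Proof.
  unfold limit_value. destruct (i =? i0)%nat.
  - rewrite Cmod_mult, Cmod_eR, Rmult_1_l.
    eapply Rle_trans; [apply Cmod_triangle|]. rewrite Cmod_1, Cmod_eR. lra.
  - rewrite Cmod_0. lra.
Qed.

Definition cubes_relation (c : nat -> nat -> C) : Prop :=
  forall (tau : C) (z : vec), 0 < Im tau ->
    dsum 2 (fun i j => c i j * cube (theta (alpha_ i) (beta_ j) tau z))%C = RtoC 0.

(* Multiply the relation by [normalizer i0 t ^ 3] and let [decay t] tend to [0]. *)
Lemma limit_relation (c : nat -> nat -> C) (i0 k : nat) :
  cubes_relation c -> (i0 < 3)%nat ->
  dsum 2 (fun i j => c i j * cube (limit_value i0 i j k))%C = RtoC 0.
Proof.
  intros Hc Hi0. set (A := 64 * 2 ^ 15).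
  assert (HA : 2 <= A) by (unfold A; simpl; lra).
  apply eq_0_of_small_bound with
    (A := dsum (G := R_AbelianMonoid) 2 (fun i j => Cmod (c i j)) * (19 * A)).
  intros eta Heta.
  destruct (decay_small (Rmin eta (1 / A))) as (t & Ht & Hdecay).
  { apply Rmin_pos; [lra | apply Rdiv_lt_0_compat; lra]. }
  assert (Hdecay_eta : decay t <= eta) by (eapply Rle_trans; [exact Hdecay | apply Rmin_l]).
  assert (Hdecay_A : decay t <= 1 / A) by (eapply Rle_trans; [exact Hdecay | apply Rmin_r]).
  assert (HtA : A * decay t <= 1).
  { apply Rmult_le_compat_l with (r := A) in Hdecay_A; [|lra].
    replace (A * (1 / A)) with 1 in Hdecay_A by (field; lra). exact Hdecay_A. }
  assert (Hhalf : decay t <= 1 / 2).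
  { apply Rle_trans with (1 / A); [lra|]. apply Rmult_le_compat_l; [lra|].
    apply Rinv_le_contravar; lra. }
  exists (decay t). split; [split; [apply exp_pos | lra]|].
  rewrite Rmult_assoc, (Rmult_assoc 19).
  apply dsum_cubes_perturb with (a := fun i j =>
    (theta (alpha_ i) (beta_ j) (0, t) (z_probe i0 k t) * RtoC (normalizer i0 t))%C).
  - rewrite (dsum_ext _ (fun i j =>
      c i j * cube (theta (alpha_ i) (beta_ j) (0, t) (z_probe i0 k t))
      * cube (RtoC (normalizer i0 t)))%C) by (intros; unfold cube; ring).
    rewrite dsum_mult_r, Hc by (simpl; lra). apply Cmult_0_l.
  - intros i j Hi Hj. apply theta_normalized_approx; [exact Hi0 | lia | exact Hhalf].
  - intros. apply Cmod_limit_value_le.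
  - exact HtA.
Qed.

Lemma row_relation (c : nat -> nat -> C) (i0 k : nat) :
  cubes_relation c -> (i0 < 3)%nat ->
  sum_n (fun j => c i0 j * cube (RtoC 1 + eR (INR (j + 2 * k) / 3)))%C 2 = RtoC 0.
Proof.
  intros Hc Hi0. pose proof (limit_relation c i0 k Hc Hi0) as H.
  rewrite (dsum_single_row _ i0) in H; [| lia |].
  2: { intros i j Hi. unfold limit_value. rewrite (proj2 (Nat.eqb_neq i i0) Hi).
       unfold cube. ring. }
  unfold limit_value in H. rewrite Nat.eqb_refl in H.
  set (p := eR (BR (INR i0 / 3) (INR i0 / 3) (INR k / 6) 0)) in H.
  assert (Hfactor : forall j,
    (c i0 j * cube (p * (RtoC 1 + eR (INR (j + 2 * k) / 3)))
     = cube p * (c i0 j * cube (RtoC 1 + eR (INR (j + 2 * k) / 3))))%C)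
    by (intro; unfold cube; ring).
  rewrite (sum_n_ext _ _ _ Hfactor), (sum_n_mult_l (K := C_Ring)) in H.
  assert (Hp : cube p <> RtoC 0).
  { unfold cube, p. intros E. apply (f_equal Cmod) in E.
    rewrite !Cmod_mult, Cmod_eR, Cmod_0 in E. lra. }
  change mult with Cmult in H. apply (f_equal (Cmult (/ cube p))) in H.
  rewrite Cmult_assoc, Cinv_l, Cmult_1_l, Cmult_0_r in H by exact Hp. exact H.
Qed.

(** * The final linear system *)

Lemma sum_n_3 (f : nat -> C) : sum_n f 2 = (f 0%nat + f 1%nat + f 2%nat)%C.
Proof. rewrite !sum_Sn, sum_O. reflexivity. Qed.

Lemma kernel_9I_minus_J (x : nat -> C) :
  (forall k, (k < 3)%nat ->
     sum_n (fun j => x j * (if (j =? k)%nat then RtoC 8 else RtoC (-1)))%C 2 = RtoC 0) ->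
  forall j, (j < 3)%nat -> x j = RtoC 0.
Proof.
  intros H.
  pose proof (H 0%nat ltac:(lia)) as H0. pose proof (H 1%nat ltac:(lia)) as H1.
  pose proof (H 2%nat ltac:(lia)) as H2.
  rewrite sum_n_3 in H0, H1, H2. cbn [Nat.eqb] in H0, H1, H2.
  assert (Hx : x 0%nat = RtoC 0 /\ x 1%nat = RtoC 0 /\ x 2%nat = RtoC 0).
  { destruct (x 0%nat) as [a0 b0], (x 1%nat) as [a1 b1], (x 2%nat) as [a2 b2].
    apply (f_equal fst) in H0 as F0, H1 as F1, H2 as F2.
    apply (f_equal snd) in H0 as G0, H1 as G1, H2 as G2.
    simpl in F0, F1, F2, G0, G1, G2.
    repeat split; apply injective_projections; simpl; lra. }
  intros j Hj. destruct j as [|[|[|j]]]; tauto || lia.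
Qed.

Lemma mod3_add_double_eqb (j k : nat) :
  (j < 3)%nat -> (k < 3)%nat -> ((j + 2 * k) mod 3 =? 0)%nat = (j =? k)%nat.
Proof. intros Hj Hk. destruct j as [|[|[|j]]], k as [|[|[|k]]]; try lia; reflexivity. Qed.

Theorem proposition7p15 :
  forall c : nat -> nat -> C,
    (forall (tau : C) (z : vec), 0 < Im tau ->
       sum_n (fun i => sum_n (fun j =>
         (c i j * cube (theta (alpha_ i) (beta_ j) tau z))%C) 2) 2 = RtoC 0) ->
    forall i j : nat, (i < 3)%nat -> (j < 3)%nat -> c i j = RtoC 0.
Proof.
  intros c Hc i j Hi Hj.
  apply (kernel_9I_minus_J (c i)); [intros k Hk | exact Hj].
  rewrite <- (row_relation c i k Hc Hi).
  apply sum_n_ext_loc; intros j' Hj'.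
  now rewrite cube_one_plus_eR_third, mod3_add_double_eqb by lia.
Qed.
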